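(* Let $M:\mathbb S\to\mathbb Q_{>0}$ be a recursive positive rational supermartingale for the interval forecast $\{1/2\}$, let $y>0$ be a real number, and let $s\in\mathbb S$ be a situation such that $M(t)\le y$ for every prefix $t$ of $s$ (including $s$ itself and the empty string). Then there is a recursive path $\omega\in\Omega$ with $\omega_{1:|s|}=s$ and $M(\omega_{1:n})\le y$ for all $n\in\mathbb N_0$.
   Context: $\mathcal X=\{0,1\}$, $\Omega=\mathcal X^{\mathbb N}$ (paths), $\mathbb S=\bigcup_{n\ge0}\mathcal X^n$ (finite binary strings), $|s|$ the length, $\omega_{1:n}=(\omega_1,\dots,\omega_n)$. A process $M:\mathbb S\to\mathbb R$ is a supermartingale for $\{1/2\}$ if $\tfrac12M(s1)+\tfrac12M(s0)\le M(s)$ for all $s\in\mathbb S$. $M$ is recursive rational if $s\mapsto M(s)\in\mathbb Q$ is computable by a Turing machine. A path $\omega$ is recursive if $n\mapsto\omega_n$ is computable by a Turing machine. *)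

From HB Require Import structures.
From mathcomp Require Import all_boot all_order all_algebra.
From mathcomp Require Import reals.
Set Implicit Arguments. Unset Strict Implicit. Unset Printing Implicit Defensive.
Import Order.TTheory GRing.Theory Num.Theory.

(* Model of computation: partial (mu-)recursive functions on nat.      *)
(* By the Church-Turing thesis (equivalence of Turing machines and     *)
(* mu-recursive functions) this captures computable by a Turing         *)
(* machine.  Argument lists are untyped (arity-free).                 *)
Inductive prf : Type :=
| PZero : prf
| PSucc : prf
| PProj : nat -> prf
| PComp : prf -> list prf -> prf
| PPrec : prf -> prf -> prf
| PMin  : prf -> prf.

Inductive eval : prf -> list nat -> nat -> Prop :=
| ev_zero v : eval PZero v 0
| ev_succ x v : eval PSucc (x :: v) x.+1
| ev_proj i v : i < size v -> eval (PProj i) v (nth 0 v i)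
| ev_comp f gs v ws y : evals gs v ws -> eval f ws y -> eval (PComp f gs) v y
| ev_prec0 f g v y : eval f v y -> eval (PPrec f g) (0 :: v) y
| ev_precS f g n v z y :
    eval (PPrec f g) (n :: v) z -> eval g (n :: z :: v) y ->
    eval (PPrec f g) (n.+1 :: v) y
| ev_min f v n :
    eval f (n :: v) 0 ->
    (forall m, m < n -> exists k, eval f (m :: v) k.+1) ->
    eval (PMin f) v n
with evals : list prf -> list nat -> list nat -> Prop :=
| evs_nil v : evals [::] v [::]
| evs_cons g gs v y ys : eval g v y -> evals gs v ys -> evals (g :: gs) v (y :: ys).

Definition recursive_nat (f : nat -> nat) : Prop :=
  exists c : prf, forall n, eval c [:: n] (f n).

(* Finite binary strings S = seq bool (true = 1, false = 0);
   paths Omega = nat -> bool, with omega_{1:n} = [:: omega 0; ...; omega (n-1)]. *)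
Definition path_prefix (w : nat -> bool) (n : nat) : seq bool := mkseq w n.

Definition recursive_path (w : nat -> bool) : Prop :=
  recursive_nat (fun n => nat_of_bool (w n)).

(* A process S -> Q is recursive rational if computable, where strings and
   rationals are coded as naturals by the standard (computable) countType
   codings [pickle]. *)
Definition recursive_rat_process (M : seq bool -> rat) : Prop :=
  exists c : prf, forall s : seq bool, eval c [:: pickle s] (pickle (M s)).

Definition supermartingale_half (M : seq bool -> rat) : Prop :=
  forall s : seq bool,
    ((1/2) * M (rcons s true) + (1/2) * M (rcons s false) <= M s)%R.

From mathcomp Require Import all_boot all_order all_algebra.
From mathcomp Require Import reals.
From mathcomp Require Import zify lra.
Import Order.TTheory GRing.Theory Num.Theory.

(** Follow [s], then keep moving to the child of smaller [M]-value.  The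
    smaller of [M (rcons t true)] and [M (rcons t false)] is at most their
    average, hence at most [M t] by the supermartingale inequality, so [M]
    never increases once [s] has been left.  The path is recursive because
    each step only compares two computed values of [M], and comparison is
    decidable on the codes of positive rationals. *)

(** * Programs for basic arithmetic *)

Lemma eval_proj i v y : i < size v -> nth 0 v i = y -> eval (PProj i) v y.
Proof. by move=> lt_i_v <-; constructor. Qed.

Lemma eval_comp1 {f g v a y} :
  eval g v a -> eval f [:: a] y -> eval (PComp f [:: g]) v y.
Proof. by move=> ga fa; econstructor; [econstructor; [exact: ga|constructor]|]. Qed.

Lemma eval_comp2 {f g1 g2 v a b y} :
  eval g1 v a -> eval g2 v b -> eval f [:: a; b] y ->
  eval (PComp f [:: g1; g2]) v y.
Proof.
by move=> g1a g2b fab; econstructor; [do 2 (econstructor; eauto); constructor|].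
Qed.

Fixpoint pconst n := if n is n'.+1 then PComp PSucc [:: pconst n'] else PZero.

Lemma eval_const n v : eval (pconst n) v n.
Proof. by elim: n => [|n IHn]; [constructor|apply: eval_comp1 IHn _; constructor]. Qed.

Definition padd := PPrec (PProj 0) (PComp PSucc [:: PProj 1]).

Lemma eval_add m n : eval padd [:: m; n] (m + n).
Proof.
elim: m => [|m IHm]; first by constructor; apply: eval_proj.
econstructor; first exact: IHm.
by apply: eval_comp1 _ (ev_succ _ _); apply: eval_proj.
Qed.

Definition pmul := PPrec PZero (PComp padd [:: PProj 1; PProj 2]).

Lemma eval_mul m n : eval pmul [:: m; n] (m * n).
Proof.
elim: m => [|m IHm]; first by do 2 constructor.
rewrite mulSn addnC; econstructor; first exact: IHm.
by apply: eval_comp2 _ _ (eval_add _ _); apply: eval_proj.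
Qed.

Definition ppred := PPrec PZero (PProj 0).

Lemma eval_pred n : eval ppred [:: n] n.-1.
Proof.
elim: n => [|n IHn]; first by do 2 constructor.
by econstructor; [exact: IHn|apply: eval_proj].
Qed.

Definition psub_rev := PPrec (PProj 0) (PComp ppred [:: PProj 1]).

Lemma eval_sub_rev n m : eval psub_rev [:: n; m] (m - n).
Proof.
elim: n => [|n IHn]; first by constructor; apply: eval_proj; rewrite ?subn0.
econstructor; first exact: IHn.
by rewrite subnS; apply: eval_comp1 _ (eval_pred _); apply: eval_proj.
Qed.

Definition psub := PComp psub_rev [:: PProj 1; PProj 0].

Lemma eval_sub m n : eval psub [:: m; n] (m - n).
Proof. by apply: eval_comp2 _ _ (eval_sub_rev _ _); apply: eval_proj. Qed.

Definition pexp2 := PPrec (pconst 1) (PComp padd [:: PProj 1; PProj 1]).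

Lemma eval_exp2 n : eval pexp2 [:: n] (2 ^ n).
Proof.
elim: n => [|n IHn]; first by constructor; apply: eval_const.
econstructor; first exact: IHn.
rewrite expnS mul2n -addnn.
by apply: eval_comp2 _ _ (eval_add _ _); apply: eval_proj.
Qed.

Definition pleq := PComp psub [:: pconst 1; psub].

Lemma eval_leq m n : eval pleq [:: m; n] (m <= n).
Proof.
apply: eval_comp2 (eval_const 1 _) (eval_sub m n) _.
by rewrite (_ : nat_of_bool _ = 1 - (m - n)); [apply: eval_sub|case: leqP; lia].
Qed.

Definition pif cb cx cy :=
  PComp padd [:: PComp pmul [:: cb; cx]; PComp pmul [:: PComp psub [:: pconst 1; cb]; cy]].

Lemma eval_if cb cx cy v (b : bool) x y :
  eval cb v b -> eval cx v x -> eval cy v y ->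
  eval (pif cb cx cy) v (if b then x else y).
Proof.
move=> cbb cxx cyy.
have -> : (if b then x else y) = b * x + (1 - b) * y.
  by case: (b); rewrite /= ?mul1n ?mul0n ?addn0.
apply: eval_comp2 _ _ (eval_add _ _).
  exact: eval_comp2 cbb cxx (eval_mul _ _).
apply: eval_comp2 _ cyy (eval_mul _ _).
exact: eval_comp2 (eval_const 1 v) cbb (eval_sub _ _).
Qed.

Definition pbitlen := PMin (PComp pleq [:: PComp pexp2 [:: PProj 0]; PProj 1]).

Lemma eval_bitlen x m :
  x < 2 ^ m -> (forall k, k < m -> 2 ^ k <= x) -> eval pbitlen [:: x] m.
Proof.
have eval_test k :
    eval (PComp pleq [:: PComp pexp2 [:: PProj 0]; PProj 1]) [:: k; x] (2 ^ k <= x).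
  apply: eval_comp2 _ _ (eval_leq _ _); last exact: eval_proj.
  by apply: eval_comp1 _ (eval_exp2 _); apply: eval_proj.
move=> x_lt le_x; constructor; first by have := eval_test m; rewrite leqNgt x_lt.
by move=> k /le_x le_k; exists 0; have := eval_test k; rewrite le_k.
Qed.

Definition plog2 := PComp ppred [:: pbitlen].

Lemma eval_log2 k : eval plog2 [:: 2 ^ k] k.
Proof.
apply: eval_comp1 _ (eval_pred k.+1).
by apply: eval_bitlen => [|j]; rewrite ?ltn_exp2l ?leq_exp2l.
Qed.

(** * Programs on the codes of strings and rationals *)

Definition code_len (l : seq nat) := foldr (fun n m => n.+1 + m) 0 l.

Lemma code_cons n l : CodeSeq.code (n :: l) = 2 ^ n * (CodeSeq.code l).*2.+1.
Proof. by []. Qed.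

Lemma code_lt_exp2 l : CodeSeq.code l < 2 ^ code_len l.
Proof.
elim: l => [|n l IHl] //; rewrite code_cons /= expnD expnS.
by have := expn_gt0 2 n; nia.
Qed.

Lemma exp2_le_code l : 2 ^ code_len l <= (CodeSeq.code l).*2.+1.
Proof.
elim: l => [|n l IHl] //; rewrite code_cons /= expnD expnS.
by have := expn_gt0 2 n; nia.
Qed.

Lemma eval_bitlen_code l : eval pbitlen [:: CodeSeq.code l] (code_len l).
Proof.
apply: eval_bitlen => [|k lt_k]; first exact: code_lt_exp2.
have := exp2_le_code l; have : 2 ^ k.+1 <= 2 ^ code_len l by rewrite leq_exp2l.
by rewrite expnS; lia.
Qed.

Lemma code_rcons l n :
  CodeSeq.code (rcons l n) = CodeSeq.code l + 2 ^ (code_len l + n).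
Proof.
elim: l => [|m l IHl]; first by rewrite /= muln1.
by rewrite rcons_cons !code_cons IHl /= expnS !expnD; nia.
Qed.

Lemma pickle_bitsE (t : seq bool) : pickle t = CodeSeq.code (map nat_of_bool t).
Proof. by []. Qed.

Definition prcons := PComp padd
  [:: PProj 0; PComp pexp2 [:: PComp padd [:: PComp pbitlen [:: PProj 0]; PProj 1]]].

Lemma eval_rcons (t : seq bool) (b : bool) :
  eval prcons [:: pickle t; nat_of_bool b] (pickle (rcons t b)).
Proof.
rewrite !pickle_bitsE map_rcons code_rcons.
apply: eval_comp2 _ _ (eval_add _ _); first exact: eval_proj.
apply: eval_comp1 _ (eval_exp2 _).
apply: eval_comp2 _ _ (eval_add _ _); last exact: eval_proj.
by apply: eval_comp1 _ (eval_bitlen_code _); apply: eval_proj.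
Qed.

(* [CodeSeq.code [:: a; b] = 2 ^ a * (2 ^ b.+1 + 1)] has binary length [a + b + 2];
   clearing its top bit leaves [2 ^ a]. *)
Definition pfst :=
  PComp plog2 [:: PComp psub [:: PProj 0; PComp pexp2 [:: PComp ppred [:: pbitlen]]]].

Lemma eval_fst a b : eval pfst [:: CodeSeq.code [:: a; b]] a.
Proof.
have top_bit : eval (PComp pexp2 [:: PComp ppred [:: pbitlen]])
    [:: CodeSeq.code [:: a; b]] (2 ^ (a + b).+1).
  apply: eval_comp1 _ (eval_exp2 _); apply: eval_comp1 (eval_bitlen_code _) _.
  by rewrite (_ : (a + b).+1 = (code_len [:: a; b]).-1); [apply: eval_pred|rewrite /=; lia].
apply: eval_comp1 _ (eval_log2 a); apply: eval_comp2 _ top_bit _; first exact: eval_proj.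
rewrite (_ : 2 ^ a = CodeSeq.code [:: a; b] - 2 ^ (a + b).+1); first exact: eval_sub.
by rewrite !code_cons /= muln1 expnS expnD; lia.
Qed.

Definition psnd := PComp psub [:: PComp psub [:: pbitlen; pfst]; pconst 2].

Lemma eval_snd a b : eval psnd [:: CodeSeq.code [:: a; b]] b.
Proof.
apply: eval_comp2 _ (eval_const 2 _) _.
  exact: eval_comp2 (eval_bitlen_code _) (eval_fst a b) (eval_sub _ _).
rewrite [X in eval _ _ X](_ : _ = code_len [:: a; b] - a - 2); first exact: eval_sub.
by rewrite /=; lia.
Qed.

Definition pnat_of_int := PComp plog2 [:: pfst].

(* [int] is coded through [nat + nat]: [Posz k] becomes the tree with
   children [CodeSeq.code [:: k] = 2 ^ k] and [CodeSeq.code [::] = 0]. *)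
Lemma eval_nat_of_int k : eval pnat_of_int [:: pickle (Posz k)] k.
Proof.
have -> : pickle (Posz k) = CodeSeq.code [:: CodeSeq.code [:: k]; CodeSeq.code [::]] by [].
by apply: eval_comp1 (eval_fst _ _) _; rewrite /= muln1; apply: eval_log2.
Qed.

Lemma pickle_ratE (q : rat) :
  pickle q = CodeSeq.code [:: pickle (numq q); pickle (denq q)].
Proof. by []. Qed.

Definition pnumq := PComp pnat_of_int [:: pfst].
Definition pdenq := PComp pnat_of_int [:: psnd].

Lemma eval_numq {q : rat} {n : nat} : numq q = n -> eval pnumq [:: pickle q] n.
Proof.
by move=> qn; rewrite pickle_ratE qn; apply: eval_comp1 (eval_fst _ _) (eval_nat_of_int _).
Qed.

Lemma eval_denq {q : rat} {n : nat} : denq q = n -> eval pdenq [:: pickle q] n.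
Proof.
by move=> qn; rewrite pickle_ratE qn; apply: eval_comp1 (eval_snd _ _) (eval_nat_of_int _).
Qed.

Definition pler :=
  PComp pleq [:: PComp pmul [:: PComp pnumq [:: PProj 0]; PComp pdenq [:: PProj 1]];
                 PComp pmul [:: PComp pnumq [:: PProj 1]; PComp pdenq [:: PProj 0]]].

Lemma eval_ler {q1 q2 : rat} : (0 < q1)%R -> (0 < q2)%R ->
  eval pler [:: pickle q1; pickle q2] (q1 <= q2)%R.
Proof.
rewrite -!numq_gt0.
case En1: (numq q1) => [n1|] // _; case En2: (numq q2) => [n2|] // _.
have [d1 Ed1] : exists d, denq q1 = Posz d by case: (denq q1) (denq_gt0 q1); eauto.
have [d2 Ed2] : exists d, denq q2 = Posz d by case: (denq q2) (denq_gt0 q2); eauto.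
have -> : (q1 <= q2)%R = (n1 * d2 <= n2 * d1).
  by rewrite -[(q1 <= q2)%R]/(le_rat q1 q2) le_ratE En1 En2 Ed1 Ed2 -!PoszM lez_nat.
apply: eval_comp2 _ _ (eval_leq _ _).
- apply: eval_comp2 _ _ (eval_mul _ _).
    by apply: eval_comp1 _ (eval_numq En1); apply: eval_proj.
  by apply: eval_comp1 _ (eval_denq Ed2); apply: eval_proj.
- apply: eval_comp2 _ _ (eval_mul _ _).
    by apply: eval_comp1 _ (eval_numq En2); apply: eval_proj.
  by apply: eval_comp1 _ (eval_denq Ed1); apply: eval_proj.
Qed.

Fixpoint pnth (s : seq bool) :=
  if s is b :: s' then PPrec (pconst b) (PComp (pnth s') [:: PProj 0]) else PZero.

Lemma eval_nth s n : eval (pnth s) [:: n] (nth false s n).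
Proof.
elim: s n => [|b s IHs] n /=; first by rewrite nth_nil; constructor.
elim: n => [|n IHn]; first by constructor; apply: eval_const.
by econstructor; [exact: IHn|apply: eval_comp1 _ (IHs n); apply: eval_proj].
Qed.

(** * Paths generated by a strategy *)

Section StrategyPath.

Variable next : nat -> seq bool -> bool.

Fixpoint strategy_prefix n : seq bool :=
  if n is k.+1 then rcons (strategy_prefix k) (next k (strategy_prefix k)) else [::].

Definition strategy_path k := next k (strategy_prefix k).

Lemma path_prefix_strategy n : path_prefix strategy_path n = strategy_prefix n.
Proof. by elim: n => [|n IHn] //; rewrite /path_prefix mkseqS -/(path_prefix _ _) IHn. Qed.

Lemma strategy_prefix_take s :
  (forall k t, k < size s -> next k t = nth false s k) ->
  forall k, k <= size s -> strategy_prefix k = take k s.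
Proof.
move=> next_s; elim=> [|k IHk] lt_k /=; first by rewrite take0.
by rewrite IHk ?(ltnW lt_k) // (take_nth false lt_k) next_s.
Qed.

Lemma strategy_path_recursive c :
  (forall k t, eval c [:: k; pickle t] (next k t)) -> recursive_path strategy_path.
Proof.
move=> c_next; pose pprefix := PPrec PZero (PComp prcons [:: PProj 1; c]).
have eval_prefix n : eval pprefix [:: n] (pickle (strategy_prefix n)).
  elim: n => [|n IHn]; first by do 2 constructor.
  econstructor; first exact: IHn.
  by apply: eval_comp2 _ (c_next _ _) (eval_rcons _ _); apply: eval_proj.
exists (PComp c [:: PProj 0; pprefix]) => n.
by apply: eval_comp2 _ (eval_prefix n) (c_next _ _); apply: eval_proj.
Qed.

End StrategyPath.

(** * The greedy strategy *)

Definition follow (s : seq bool) (next : seq bool -> bool) k t :=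
  if k < size s then nth false s k else next t.

Lemma strategy_prefix_follow s next k :
  k <= size s -> strategy_prefix (follow s next) k = take k s.
Proof. by apply: strategy_prefix_take => j t lt_j; rewrite /follow lt_j. Qed.

Definition pfollow s c :=
  pif (PComp pleq [:: PComp PSucc [:: PProj 0]; pconst (size s)])
      (PComp (pnth s) [:: PProj 0]) (PComp c [:: PProj 1]).

Lemma eval_follow s c (next : seq bool -> bool) k (t : seq bool) :
  (forall u, eval c [:: pickle u] (next u)) ->
  eval (pfollow s c) [:: k; pickle t] (follow s next k t).
Proof.
move=> c_next; rewrite /follow (fun_if nat_of_bool); apply: eval_if.
- apply: eval_comp2 _ (eval_const _ _) (eval_leq _ _).
  by apply: eval_comp1 _ (ev_succ _ _); apply: eval_proj.
- by apply: eval_comp1 _ (eval_nth _ _); apply: eval_proj.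
- by apply: eval_comp1 _ (c_next _); apply: eval_proj.
Qed.

Definition greedy_bit (M : seq bool -> rat) t :=
  (M (rcons t true) <= M (rcons t false))%R.

Lemma greedy_bit_le (M : seq bool -> rat) (t : seq bool) :
  supermartingale_half M -> (M (rcons t (greedy_bit M t)) <= M t)%R.
Proof.
move=> /(_ t); rewrite /greedy_bit.
by have [le_10|lt_01] := leP (M (rcons t true)) (M (rcons t false)); lra.
Qed.

Definition pgreedy_bit c :=
  PComp pler [:: PComp c [:: PComp prcons [:: PProj 0; pconst 1]];
                 PComp c [:: PComp prcons [:: PProj 0; pconst 0]]].

Lemma eval_greedy_bit c (M : seq bool -> rat) (t : seq bool) :
  (forall u, eval c [:: pickle u] (pickle (M u))) -> (forall u, (0 < M u)%R) ->
  eval (pgreedy_bit c) [:: pickle t] (greedy_bit M t).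
Proof.
move=> cM M_gt0; apply: eval_comp2 _ _ (eval_ler (M_gt0 _) (M_gt0 _)).
  apply: eval_comp1 _ (cM _).
  by apply: eval_comp2 _ (eval_const 1 _) (eval_rcons t true); apply: eval_proj.
apply: eval_comp1 _ (cM _).
by apply: eval_comp2 _ (eval_const 0 _) (eval_rcons t false); apply: eval_proj.
Qed.

Lemma greedy_prefix_le M s n : supermartingale_half M ->
  (M (strategy_prefix (follow s (greedy_bit M)) n) <= M (take (minn n (size s)) s))%R.
Proof.
move=> Msup; elim: n => [|n IHn]; first by rewrite min0n strategy_prefix_follow.
have [le_n|] := leqP n.+1 (size s); first by rewrite strategy_prefix_follow.
rewrite ltnS => le_s_n; rewrite (minn_idPr le_s_n) in IHn; apply: le_trans IHn.
have follow_greedy t : follow s (greedy_bit M) n t = greedy_bit M t.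
  by rewrite /follow ltnNge le_s_n.
by rewrite /= follow_greedy; apply: greedy_bit_le.
Qed.

Theorem lemma7 (R : realType) (M : seq bool -> rat) (y : R) (s : seq bool) :
  recursive_rat_process M ->
  (forall t : seq bool, (0 < M t)%R) ->
  supermartingale_half M ->
  (0 < y)%R ->
  (forall k : nat, k <= size s -> (ratr (M (take k s)) <= y)%R) ->
  exists w : nat -> bool,
    [/\ recursive_path w,
        path_prefix w (size s) = s &
        forall n : nat, (ratr (M (path_prefix w n)) <= y)%R].
Proof.
move=> [c cM] M_gt0 Msup _ My.
exists (strategy_path (follow s (greedy_bit M))); split.
- apply: (strategy_path_recursive _ (pfollow s (pgreedy_bit c))) => k t.
  by apply: eval_follow => u; apply: eval_greedy_bit.
- by rewrite path_prefix_strategy strategy_prefix_follow ?take_size.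
- move=> n; rewrite path_prefix_strategy.
  apply: le_trans (My _ (geq_minr n (size s))).
  by rewrite ler_rat; apply: greedy_prefix_le.
Qed.
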